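(* Let $(\ell_n)_{n\in\mathbb N}$ and $(\sigma_{n,0})_{n\in\mathbb N}$ be sequences of strictly positive reals, $(\kappa_n)_{n\in\mathbb N}$ a sequence of reals, and $(\sigma_{n,1})_{n\in\mathbb N}$, $(\sigma_{n,-1})_{n\in\mathbb N}$ sequences of nonnegative reals. Put $\sigma_n=\max(\sigma_{n,-1},\sigma_{n,1})$. Assume $$\liminf_{n\to\infty}\frac{1}{n^2}\Big(\frac{\ell_n}{\sigma_{n,0}}+\frac{(\kappa_n^-)^2}{\sigma_{n,0}^2}\Big)=0 .$$ Assume $\mathbb N$ is a disjoint union $\mathbb N=\mathbb N_a\cup\mathbb N_b$ such that (a) $2\sigma_n\le\sigma_{n,0}$ for every $n\in\mathbb N_a$, and (b) $\sigma_n\le\sigma_{n,0}<2\sigma_n$ and $-2(\sigma_{n,0}-\sigma_n)\sqrt{\ell_n}\le \kappa_n\sqrt{2\sigma_n-\sigma_{n,0}}$ for every $n\in\mathbb N_b$. Let $x_0\in\mathbb R$; if $1\in\mathbb N_a$, $x_0$ is arbitrary, while if $1\in\mathbb N_b$ assume additionally $$-2(\sigma_{1,0}-\sigma_1)\sqrt{\ell_1}\le(\sigma_{1,-1}x_0+\kappa_1)\sqrt{2\sigma_1-\sigma_{1,0}} .$$ Then there is at most one positive sequence $(x_n)_{n\in\mathbb N}$ satisfying $$\ell_n = x_n\big(\sigma_{n,1}x_{n+1}+\sigma_{n,0}x_n+\sigma_{n,-1}x_{n-1}\big)+\kappa_n x_n,\qquad n\in\mathbb N,$$ with the given $x_0$;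 equivalently, there is a number $x^\ast>0$ such that every positive solution has $x_1=x^\ast$, and any two positive solutions coincide.
   Context: $\mathbb N=\{1,2,3,\dots\}$. For $a\in\mathbb R$, $a^-=(|a|-a)/2$ denotes the negative part. A solution with given $x_0\in\mathbb R$ is a real sequence $(x_n)_{n\in\mathbb N}$ satisfying the displayed equation for all $n\in\mathbb N$ (where the $n=1$ equation involves the given $x_0$); it is positive if $x_n>0$ for all $n\in\mathbb N$. *)

From Stdlib Require Import Reals Lra.
Open Scope R_scope.

Definition negpart (a : R) : R := (Rabs a - a) / 2.

Definition liminf_eq (u : nat -> R) (l : R) : Prop :=
  (forall eps, 0 < eps -> exists N, forall n, (N <= n)%nat -> l - eps < u n) /\
  (forall eps, 0 < eps -> forall N, exists n, (N <= n)%nat /\ u n < l + eps).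

(* x is a solution with given x0 (index 0 holds x0; N = {1,2,...}) *)
Definition is_solution (ell s1 s0 sm1 kappa : nat -> R) (x0 : R) (x : nat -> R) : Prop :=
  x 0%nat = x0 /\
  forall n, (1 <= n)%nat ->
    ell n = x n * (s1 n * x (S n) + s0 n * x n + sm1 n * x (n - 1)%nat) + kappa n * x n.

Definition is_positive (x : nat -> R) : Prop :=
  forall n, (1 <= n)%nat -> 0 < x n.

From Stdlib Require Import Reals Lra Lia Psatz Classical.
Open Scope R_scope.

(* If x and y are two positive solutions with the same x_0, their difference
   d = y - x satisfies the linear three-term recurrence
     s1_n d_{n+1} + A_n d_n + sm1_n d_{n-1} = 0,   A_n = s0_n + ell_n/(x_n y_n),
   and the hypotheses (a)/(b) give the "diagonal dominance" A_n >= 2 sigma_n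
   (in case (b) through the a priori bound (2 sigma_n - s0_n) x_n^2 <= ell_n).
   For such a recurrence, a first nonzero value d_k after d_{k-1} = 0 forces
   linear growth |d_{k+j}| >= (j+1) |d_k| (the alternating-sign sequence has
   nondecreasing increments).  On the other hand every positive solution obeys
   x_n^2 <= 2 Q_n with Q_n = ell_n/s0_n + (kappa_n^-)^2/s0_n^2, and
   liminf Q_n/n^2 = 0 excludes linear growth of d. *)

Lemma increment_step (s1 A sm1 e_prev e_cur e_next c : R) :
  0 <= s1 -> 0 <= sm1 -> 0 < A -> 2 * Rmax sm1 s1 <= A ->
  0 < c -> 0 <= e_prev -> c <= e_cur - e_prev ->
  s1 * e_next = A * e_cur - sm1 * e_prev ->
  c <= e_next - e_cur.
Proof.
  intros Hs1 Hsm1 HA Hdom Hc Hprev Hinc Hrec.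
  pose proof (Rmax_l sm1 s1) as Hl; pose proof (Rmax_r sm1 s1) as Hr.
  set (M := Rmax sm1 s1) in *.
  destruct (Req_dec s1 0) as [Z|Z].
  - (* without forward coupling the recurrence forces A e_cur = sm1 e_prev,
       impossible since sm1 e_prev <= (A/2) e_cur < A e_cur *)
    exfalso. subst s1.
    assert (sm1 * e_prev <= sm1 * e_cur) by (apply Rmult_le_compat_l; lra).
    assert (0 < A * e_cur) by (apply Rmult_lt_0_compat; lra).
    nra.
  - assert (Hkey : s1 * c <= s1 * (e_next - e_cur)).
    { assert (M * c <= M * (e_cur - e_prev)) by (apply Rmult_le_compat_l; lra).
      assert (0 <= (M - sm1) * e_prev) by (apply Rmult_le_pos; lra).
      assert (0 <= (M - s1) * e_cur) by (apply Rmult_le_pos; lra).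
      assert (s1 * c <= M * c) by (apply Rmult_le_compat_r; lra).
      assert ((2 * M) * e_cur <= A * e_cur) by (apply Rmult_le_compat_r; lra).
      nra. }
    apply (Rmult_le_reg_l s1); lra.
Qed.

Lemma linear_growth (e s1 A sm1 : nat -> R) (p : nat) :
  e p = 0 -> 0 < e (S p) ->
  (forall n, (p <= n)%nat -> 0 <= s1 (S n) /\ 0 <= sm1 (S n) /\ 0 < A (S n) /\
                            2 * Rmax (sm1 (S n)) (s1 (S n)) <= A (S n)) ->
  (forall n, (p <= n)%nat ->
     s1 (S n) * e (S (S n)) = A (S n) * e (S n) - sm1 (S n) * e n) ->
  forall j, INR (S j) * e (S p) <= e (S p + j)%nat.
Proof.
  intros Hp Hpos Hcoef Hrec.
  assert (Inv : forall j, 0 <= e (p + j)%nat /\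
                          e (S p) <= e (S (p + j)) - e (p + j)%nat /\
                          INR (S j) * e (S p) <= e (S (p + j))).
  { induction j as [|j [Hnonneg [Hinc Hlin]]].
    - rewrite Nat.add_0_r, Hp. simpl. lra.
    - replace (p + S j)%nat with (S (p + j)) by lia.
      destruct (Hcoef (p + j)%nat ltac:(lia)) as [Hs1 [Hsm1 [HA Hdom]]].
      pose proof (increment_step _ _ _ _ _ _ _ Hs1 Hsm1 HA Hdom Hpos Hnonneg Hinc
                    (Hrec (p + j)%nat ltac:(lia))) as Hinc'.
      pose proof (pos_INR j).
      rewrite !S_INR in *. nra. }
  intro j. replace (S p + j)%nat with (S (p + j)) by lia. apply Inv.
Qed.

Lemma sign_square (k : nat) : (-1) ^ k * (-1) ^ k = 1.
Proof. rewrite <- Rpow_mult_distr. replace (-1 * -1) with 1 by ring. apply pow1. Qed.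

(* Linear growth of |d| for s1 d_{n+1} + A d_n + sm1 d_{n-1} = 0: apply
   [linear_growth] to the sign-corrected sequence (-1)^i d_i (-1)^(p+1) d_{p+1}. *)
Lemma abs_linear_growth (d s1 A sm1 : nat -> R) (p : nat) :
  d p = 0 -> d (S p) <> 0 ->
  (forall n, (p <= n)%nat -> 0 <= s1 (S n) /\ 0 <= sm1 (S n) /\ 0 < A (S n) /\
                            2 * Rmax (sm1 (S n)) (s1 (S n)) <= A (S n)) ->
  (forall n, (p <= n)%nat ->
     s1 (S n) * d (S (S n)) + A (S n) * d (S n) + sm1 (S n) * d n = 0) ->
  forall j, INR (S j) * Rabs (d (S p)) <= Rabs (d (S p + j)%nat).
Proof.
  intros Hp Hnz Hcoef Hrec j.
  set (c := (-1) ^ S p * d (S p)).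
  set (e := fun i => (-1) ^ i * d i * c).
  assert (He_start : e (S p) = d (S p) * d (S p)).
  { unfold e, c.
    transitivity (((-1) ^ S p * (-1) ^ S p) * (d (S p) * d (S p))); [ring|].
    rewrite sign_square; ring. }
  assert (Hgrow : INR (S j) * e (S p) <= e (S p + j)%nat).
  { apply (linear_growth e s1 A sm1 p); auto.
    - unfold e. rewrite Hp. ring.
    - rewrite He_start. assert (0 < d (S p) * d (S p)) by nra. lra.
    - intros n Hn. specialize (Hrec n Hn). unfold e; simpl.
      transitivity (((-1) ^ n * c) * (s1 (S n) * d (S (S n)) + A (S n) * d (S n)
                                      + sm1 (S n) * d n)
                    + A (S n) * (-1 * (-1) ^ n * d (S n) * c)
                    - sm1 (S n) * ((-1) ^ n * d n * c)); [ring|].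
      rewrite Hrec. ring. }
  assert (Habs : Rabs (e (S p + j)%nat) = Rabs (d (S p + j)%nat) * Rabs (d (S p))).
  { unfold e, c. rewrite !Rabs_mult, !pow_1_abs. ring. }
  assert (Hsq : e (S p) = Rabs (d (S p)) * Rabs (d (S p))).
  { rewrite He_start, <- Rabs_mult. symmetry. apply Rabs_right. nra. }
  pose proof (Rle_abs (e (S p + j)%nat)).
  pose proof (Rabs_pos_lt _ Hnz).
  apply (Rmult_le_reg_r (Rabs (d (S p)))); [lra|].
  rewrite Hsq in Hgrow. nra.
Qed.

Lemma no_linear_growth (d Q : nat -> R) (n : nat) (delta : R) :
  (1 <= n)%nat -> 0 < delta ->
  liminf_eq (fun m => / (INR m ^ 2) * Q m) 0 ->
  (forall m, (2 <= m)%nat -> d m * d m <= 4 * Q m) ->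
  (forall j, INR (S j) * delta <= Rabs (d (n + j)%nat)) ->
  False.
Proof.
  intros Hn Hdelta [_ Hfreq] Hbound Hgrow.
  set (a := INR n).
  assert (Ha : 0 < a) by (apply lt_0_INR; lia).
  destruct (Hfreq (delta ^ 2 / (8 * a ^ 2)) ltac:(apply Rdiv_lt_0_compat; nra)
              (n + 2)%nat) as [m [Hm Hsmall]].
  rewrite Rplus_0_l in Hsmall.
  set (b := INR (S (m - n))).
  assert (Hb : 0 < b) by (apply lt_0_INR; lia).
  set (mm := INR m).
  assert (Hmm : 0 < mm) by (apply lt_0_INR; lia).
  assert (Hm_le : mm <= a * b).
  { unfold mm, a, b. rewrite <- mult_INR. apply le_INR. nia. }
  assert (Hlow : (b * delta) * (b * delta) <= 4 * Q m).
  { pose proof (Hgrow (m - n)%nat) as G. replace (n + (m - n))%nat with m in G by lia.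
    fold b in G.
    assert (Rabs (d m) * Rabs (d m) = d m * d m)
      by (rewrite <- Rabs_mult; apply Rabs_right; nra).
    pose proof (Hbound m ltac:(lia)).
    assert (0 <= b * delta) by nra.
    assert ((b * delta) * (b * delta) <= Rabs (d m) * Rabs (d m))
      by (apply Rmult_le_compat; lra).
    lra. }
  assert (Hup : Q m < delta ^ 2 / (8 * a ^ 2) * (a * b) ^ 2).
  { assert (HQ : Q m < delta ^ 2 / (8 * a ^ 2) * mm ^ 2).
    { replace (Q m) with (mm ^ 2 * (/ mm ^ 2 * Q m)) by (field; lra).
      rewrite (Rmult_comm _ (mm ^ 2)). apply Rmult_lt_compat_l; [nra | exact Hsmall]. }
    assert (delta ^ 2 / (8 * a ^ 2) * mm ^ 2 <= delta ^ 2 / (8 * a ^ 2) * (a * b) ^ 2).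
    { apply Rmult_le_compat_l; [apply Rlt_le, Rdiv_lt_0_compat |]; nra. }
    lra. }
  replace (delta ^ 2 / (8 * a ^ 2) * (a * b) ^ 2) with ((b * delta) * (b * delta) / 8)
    in Hup by (field; lra).
  nra.
Qed.

Lemma negpart_spec (a : R) : 0 <= negpart a /\ - negpart a <= a.
Proof.
  unfold negpart. destruct (Rle_dec 0 a).
  - rewrite Rabs_right; lra.
  - rewrite Rabs_left; lra.
Qed.

Lemma quadratic_upper_bound (ell s0 k x : R) :
  0 < s0 -> 0 < x -> s0 * x * x + k * x <= ell ->
  x * x <= 2 * (ell / s0 + negpart k ^ 2 / s0 ^ 2).
Proof.
  intros Hs0 Hx Hq. destruct (negpart_spec k) as [Hm Hk].
  set (m := negpart k) in *. set (z := s0 * x).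
  assert (H1 : z * z - m * z <= s0 * ell).
  { assert (s0 * (s0 * x * x + k * x) <= s0 * ell) by (apply Rmult_le_compat_l; lra).
    assert (0 <= (k + m) * (s0 * x)) by (apply Rmult_le_pos; nra).
    unfold z. nra. }
  assert (H2 : z * z <= 2 * s0 * ell + m * m) by (pose proof (pow2_ge_0 (z - m)); nra).
  apply (Rmult_le_reg_l (s0 ^ 2)); [nra|].
  replace (s0 ^ 2 * (x * x)) with (z * z) by (unfold z; ring).
  replace (s0 ^ 2 * (2 * (ell / s0 + m ^ 2 / s0 ^ 2))) with (2 * s0 * ell + 2 * (m * m))
    by (field; lra).
  nra.
Qed.

(* Case (b) bound: with v = sqrt(2 sg - s0), u = sqrt ell and w = v x, the
   hypotheses give (w - u)(s0 w + v^2 u) <= 0, hence w <= u. *)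
Lemma case_b_bound (ell s0 sg k x : R) :
  0 < ell -> 0 < x -> sg <= s0 -> s0 < 2 * sg ->
  s0 * x * x + k * x <= ell ->
  - 2 * (s0 - sg) * sqrt ell <= k * sqrt (2 * sg - s0) ->
  (2 * sg - s0) * (x * x) <= ell.
Proof.
  intros Hell Hx Hsg Hsg2 Hq Hk.
  set (u := sqrt ell) in *. set (v := sqrt (2 * sg - s0)) in *.
  assert (Hu : u * u = ell) by (apply sqrt_sqrt; lra).
  assert (Hv : v * v = 2 * sg - s0) by (apply sqrt_sqrt; lra).
  assert (Hu0 : 0 < u) by (apply sqrt_lt_R0; lra).
  assert (Hv0 : 0 < v) by (apply sqrt_lt_R0; lra).
  set (w := v * x).
  assert (Hkv : - (s0 - v * v) * u <= k * v)
    by (rewrite Hv; replace (- (s0 - (2 * sg - s0)) * u) with (- 2 * (s0 - sg) * u) by ring; lra).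
  assert (Hfactor : (w - u) * (s0 * w + v * v * u) <= 0).
  { assert (v * (s0 * x * x + k * x) <= v * ell) by (apply Rmult_le_compat_l; lra).
    assert (- (s0 - v * v) * u * x <= k * v * x) by (apply Rmult_le_compat_r; lra).
    unfold w. nra. }
  assert (Hw : w <= u).
  { assert (0 < v * v * u) by (apply Rmult_lt_0_compat; nra).
    assert (0 < w) by (unfold w; nra).
    assert (0 < s0 * w) by (apply Rmult_lt_0_compat; lra).
    nra. }
  rewrite <- Hv, <- Hu. replace (v * v * (x * x)) with (w * w) by (unfold w; ring).
  assert (0 <= w) by (unfold w; nra).
  apply Rmult_le_compat; lra.
Qed.

Section PositiveSolutions.

Variables (ell s0 kappa s1 sm1 : nat -> R) (x0 : R).
Hypothesis Hell : forall n, (1 <= n)%nat -> 0 < ell n.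
Hypothesis Hs0 : forall n, (1 <= n)%nat -> 0 < s0 n.
Hypothesis Hs1 : forall n, (1 <= n)%nat -> 0 <= s1 n.
Hypothesis Hsm1 : forall n, (1 <= n)%nat -> 0 <= sm1 n.
Variable Na : nat -> Prop.
Hypothesis Ha : forall n, (1 <= n)%nat -> Na n -> 2 * Rmax (sm1 n) (s1 n) <= s0 n.
Hypothesis Hb : forall n, (1 <= n)%nat -> ~ Na n ->
  Rmax (sm1 n) (s1 n) <= s0 n /\ s0 n < 2 * Rmax (sm1 n) (s1 n) /\
  - 2 * (s0 n - Rmax (sm1 n) (s1 n)) * sqrt (ell n)
    <= kappa n * sqrt (2 * Rmax (sm1 n) (s1 n) - s0 n).
Hypothesis Hx0 : ~ Na 1%nat ->
  - 2 * (s0 1%nat - Rmax (sm1 1%nat) (s1 1%nat)) * sqrt (ell 1%nat)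
    <= (sm1 1%nat * x0 + kappa 1%nat) * sqrt (2 * Rmax (sm1 1%nat) (s1 1%nat) - s0 1%nat).
Hypothesis Hliminf : liminf_eq
  (fun n => / (INR n ^ 2) * (ell n / s0 n + negpart (kappa n) ^ 2 / s0 n ^ 2)) 0.

Let solution (x : nat -> R) : Prop :=
  is_solution ell s1 s0 sm1 kappa x0 x /\ is_positive x.

(* Dropping the nonnegative forward term of the equation. *)
Lemma solution_quadratic_ineq (x : nat -> R) : solution x ->
  forall n, (1 <= n)%nat ->
  s0 n * x n * x n + (sm1 n * x (n - 1)%nat + kappa n) * x n <= ell n.
Proof.
  intros [[_ Heq] Hpos] n Hn. rewrite (Heq n Hn).
  pose proof (Hpos n Hn). pose proof (Hpos (S n) ltac:(lia)).
  assert (0 <= x n * (s1 n * x (S n))).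
  { apply Rmult_le_pos; [lra|]. apply Rmult_le_pos; [apply Hs1; lia | lra]. }
  nra.
Qed.

(* For n >= 2 also x_{n-1} > 0, so the bound holds with kappa_n alone. *)
Lemma solution_quadratic_ineq_tail (x : nat -> R) : solution x ->
  forall n, (2 <= n)%nat -> s0 n * x n * x n + kappa n * x n <= ell n.
Proof.
  intros Hx n Hn. pose proof (solution_quadratic_ineq x Hx n ltac:(lia)).
  destruct Hx as [_ Hpos].
  pose proof (Hpos n ltac:(lia)). pose proof (Hpos (n - 1)%nat ltac:(lia)).
  assert (0 <= sm1 n * x (n - 1)%nat * x n).
  { apply Rmult_le_pos; [apply Rmult_le_pos; [apply Hsm1; lia|]|]; lra. }
  nra.
Qed.

Lemma difference_recurrence (x y : nat -> R) : solution x -> solution y ->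
  forall n, (1 <= n)%nat ->
  s1 n * (y (S n) - x (S n)) + (s0 n + ell n / (x n * y n)) * (y n - x n)
    + sm1 n * (y (n - 1)%nat - x (n - 1)%nat) = 0.
Proof.
  intros [[_ Hx] Hpx] [[_ Hy] Hpy] n Hn.
  pose proof (Hpx n Hn). pose proof (Hpy n Hn).
  assert (Ex : ell n / x n = s1 n * x (S n) + s0 n * x n + sm1 n * x (n - 1)%nat + kappa n)
    by (rewrite (Hx n Hn); field; lra).
  assert (Ey : ell n / y n = s1 n * y (S n) + s0 n * y n + sm1 n * y (n - 1)%nat + kappa n)
    by (rewrite (Hy n Hn); field; lra).
  replace ((s0 n + ell n / (x n * y n)) * (y n - x n))
    with (s0 n * (y n - x n) + (ell n / x n - ell n / y n)) by (field; lra).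
  lra.
Qed.

Lemma case_b_solution_bound (x : nat -> R) : solution x ->
  forall n, (1 <= n)%nat -> ~ Na n ->
  (2 * Rmax (sm1 n) (s1 n) - s0 n) * (x n * x n) <= ell n.
Proof.
  intros Hx n Hn HN. destruct (Hb n Hn HN) as [B1 [B2 B3]].
  pose proof (proj2 Hx n Hn) as Hxn.
  destruct (Nat.eq_dec n 1) as [->|Hne].
  - apply (case_b_bound _ _ _ (sm1 1%nat * x0 + kappa 1%nat)); auto.
    pose proof (solution_quadratic_ineq x Hx 1%nat (le_n 1)) as Hq.
    destruct Hx as [[Hinit _] _]. simpl in Hq. rewrite Hinit in Hq. exact Hq.
  - apply (case_b_bound _ _ _ (kappa n)); auto.
    apply solution_quadratic_ineq_tail; auto; lia.
Qed.

Lemma solution_upper_bound (x : nat -> R) : solution x ->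
  forall n, (2 <= n)%nat ->
  x n * x n <= 2 * (ell n / s0 n + negpart (kappa n) ^ 2 / s0 n ^ 2).
Proof.
  intros Hx n Hn. apply quadratic_upper_bound.
  - apply Hs0; lia.
  - apply (proj2 Hx); lia.
  - apply solution_quadratic_ineq_tail; auto.
Qed.

Lemma difference_dominance (x y : nat -> R) : solution x -> solution y ->
  forall n, (1 <= n)%nat ->
  0 < s0 n + ell n / (x n * y n) /\
  2 * Rmax (sm1 n) (s1 n) <= s0 n + ell n / (x n * y n).
Proof.
  intros Hx Hy n Hn.
  pose proof (proj2 Hx n Hn). pose proof (proj2 Hy n Hn). pose proof (Hs0 n Hn).
  assert (Hxy0 : 0 < x n * y n) by (apply Rmult_lt_0_compat; lra).
  assert (Hq : 0 < ell n / (x n * y n)) by (apply Rdiv_lt_0_compat; [exact (Hell n Hn) | lra]).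
  split; [lra|].
  destruct (classic (Na n)) as [HN|HN]; [pose proof (Ha n Hn HN); lra|].
  pose proof (case_b_solution_bound x Hx n Hn HN) as Bx.
  pose proof (case_b_solution_bound y Hy n Hn HN) as By.
  set (D := 2 * Rmax (sm1 n) (s1 n) - s0 n) in *.
  (* 2 x y <= x^2 + y^2 turns the two square bounds into D x y <= ell *)
  assert (Hxy : D * (x n * y n) <= ell n).
  { destruct (Rle_dec D 0).
    - assert (D * (x n * y n) <= 0) by nra. pose proof (Hell n Hn). lra.
    - pose proof (pow2_ge_0 (x n - y n)). nra. }
  assert (D <= ell n / (x n * y n)).
  { apply (Rmult_le_reg_l (x n * y n)); [lra|].
    replace (x n * y n * (ell n / (x n * y n))) with (ell n) by (field; lra). lra. }
  unfold D in *. lra.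
Qed.

(* Two positive solutions agreeing at n-1 agree at n: otherwise their
   difference would grow linearly from n on, contradicting the liminf. *)
Lemma solutions_agree_step (x y : nat -> R) : solution x -> solution y ->
  forall n, (1 <= n)%nat -> x (n - 1)%nat = y (n - 1)%nat -> x n = y n.
Proof.
  intros Hx Hy n Hn Hprev.
  destruct (Req_dec (y n - x n) 0) as [Z|Hnz]; [lra | exfalso].
  destruct n as [|p]; [lia|]. replace (S p - 1)%nat with p in Hprev by lia.
  set (d := fun i => y i - x i).
  set (A := fun i => s0 i + ell i / (x i * y i)).
  assert (Hgrow : forall j, INR (S j) * Rabs (d (S p)) <= Rabs (d (S p + j)%nat)).
  { apply (abs_linear_growth d s1 A sm1 p).
    - unfold d. lra.
    - exact Hnz.
    - intros m _. unfold A.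
      destruct (difference_dominance x y Hx Hy (S m) ltac:(lia)) as [HA Hdom].
      repeat split; auto; [apply Hs1 | apply Hsm1]; lia.
    - intros m _. pose proof (difference_recurrence x y Hx Hy (S m) ltac:(lia)) as R.
      replace (S m - 1)%nat with m in R by lia. exact R. }
  apply (no_linear_growth d (fun m => ell m / s0 m + negpart (kappa m) ^ 2 / s0 m ^ 2)
           (S p) (Rabs (d (S p)))).
  - lia.
  - apply Rabs_pos_lt. exact Hnz.
  - exact Hliminf.
  - intros m Hm. unfold d.
    pose proof (solution_upper_bound x Hx m Hm). pose proof (solution_upper_bound y Hy m Hm).
    pose proof (proj2 Hx m ltac:(lia)). pose proof (proj2 Hy m ltac:(lia)).
    assert (0 < x m * y m) by (apply Rmult_lt_0_compat; lra).
    nra.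
  - exact Hgrow.
Qed.

Lemma solutions_agree (x y : nat -> R) : solution x -> solution y -> forall n, x n = y n.
Proof.
  intros Hx Hy n. induction n as [|n IH].
  - destruct Hx as [[-> _] _], Hy as [[-> _] _]. reflexivity.
  - apply solutions_agree_step; auto; [lia|]. replace (S n - 1)%nat with n by lia. exact IH.
Qed.

End PositiveSolutions.

Theorem theorem5p2
  (ell s0 kappa s1 sm1 : nat -> R)
  (Hell : forall n, (1 <= n)%nat -> 0 < ell n)
  (Hs0 : forall n, (1 <= n)%nat -> 0 < s0 n)
  (Hs1 : forall n, (1 <= n)%nat -> 0 <= s1 n)
  (Hsm1 : forall n, (1 <= n)%nat -> 0 <= sm1 n)
  (Hliminf : liminf_eq
     (fun n => / (INR n ^ 2) *
        (ell n / s0 n + (negpart (kappa n)) ^ 2 / (s0 n ^ 2))) 0)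
  (Na : nat -> Prop)
  (Ha : forall n, (1 <= n)%nat -> Na n ->
          2 * Rmax (sm1 n) (s1 n) <= s0 n)
  (Hb : forall n, (1 <= n)%nat -> ~ Na n ->
          Rmax (sm1 n) (s1 n) <= s0 n /\ s0 n < 2 * Rmax (sm1 n) (s1 n) /\
          - 2 * (s0 n - Rmax (sm1 n) (s1 n)) * sqrt (ell n)
            <= kappa n * sqrt (2 * Rmax (sm1 n) (s1 n) - s0 n))
  (x0 : R)
  (Hx0 : ~ Na 1%nat ->
          - 2 * (s0 1%nat - Rmax (sm1 1%nat) (s1 1%nat)) * sqrt (ell 1%nat)
            <= (sm1 1%nat * x0 + kappa 1%nat)
               * sqrt (2 * Rmax (sm1 1%nat) (s1 1%nat) - s0 1%nat)) :
  exists xstar, 0 < xstar /\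
    (forall x, is_solution ell s1 s0 sm1 kappa x0 x -> is_positive x ->
       x 1%nat = xstar) /\
    (forall x y, is_solution ell s1 s0 sm1 kappa x0 x -> is_positive x ->
       is_solution ell s1 s0 sm1 kappa x0 y -> is_positive y ->
       forall n, (1 <= n)%nat -> x n = y n).
Proof.
  pose proof (solutions_agree ell s0 kappa s1 sm1 x0 Hell Hs0 Hs1 Hsm1 Na Ha Hb Hx0 Hliminf)
    as Hagree.
  (* x* is x_1 of some positive solution if there is one; otherwise any x* > 0 *)
  destruct (classic (exists z, is_solution ell s1 s0 sm1 kappa x0 z /\ is_positive z))
    as [[z [Hz Hpz]] | Hnone].
  - exists (z 1%nat). split; [apply Hpz; lia|]. split.
    + intros x Hx Hpx. apply Hagree; split; assumption.
    + intros x y Hx Hpx Hy Hpy n _. apply Hagree; split; assumption.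
  - exists 1. split; [lra|]. split.
    + intros x Hx Hpx. exfalso. apply Hnone. exists x. split; assumption.
    + intros x y Hx Hpx. exfalso. apply Hnone. exists x. split; assumption.
Qed.
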